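(* (a) If $X\sim\mathrm{Poisson}(\lambda)$ and $Y\sim\mathrm{Poisson}(\mu)$ with $\lambda,\mu>0$, then $X\le_{wd}Y$ if and only if $\lambda\le\mu$. (b) If $X\sim\mathrm{Bin}(m,p)$ and $Y\sim\mathrm{Bin}(n,p)$ with $p\in(0,1)$, then $X\le_{wd}Y$ if and only if $m\le n$. (c) If $X\sim\mathrm{NB}(r,p)$ and $Y\sim\mathrm{NB}(s,p)$, then $X\le_{wd}Y$ if and only if $r\le s$.
   Context: For a real random variable $X$, its Lévy concentration function is $Q_X(\varepsilon)=\sup_{x_0\in\mathbb{R}}\Pr\{X\in[x_0,x_0+\varepsilon]\}$, $\varepsilon>0$. For random variables $X,Y$, write $X\le_{wd}Y$ if $Q_X(\varepsilon)\ge Q_Y(\varepsilon)$ for all $\varepsilon>0$. $\mathrm{NB}(r,p)$ denotes the negative binomial distribution with size parameter $r>0$ and success probability $p\in(0,1)$ (so that $\mathrm{NB}(r,p)*\mathrm{NB}(s,p)=\mathrm{NB}(r+s,p)$). *)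

From Stdlib Require Import Reals Arith.
From Coquelicot Require Import Coquelicot.
Open Scope R_scope.

Definition prob_interval (pmf : nat -> R) (a b : R) : R :=
  Series (fun k : nat =>
    if Rle_dec a (INR k) then (if Rle_dec (INR k) b then pmf k else 0) else 0).

Definition levy_conc (pmf : nat -> R) (eps : R) : Rbar :=
  Lub_Rbar (fun y : R => exists x0 : R, y = prob_interval pmf x0 (x0 + eps)).

Definition wd_le (pmfX pmfY : nat -> R) : Prop :=
  forall eps : R, 0 < eps -> Rbar_le (levy_conc pmfY eps) (levy_conc pmfX eps).

Definition poisson_pmf (lam : R) (k : nat) : R :=
  exp (- lam) * lam ^ k / INR (Factorial.fact k).

Definition binom_pmf (n : nat) (p : R) (k : nat) : R :=
  if Nat.leb k n then Binomial.C n k * p ^ k * (1 - p) ^ (n - k) else 0.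

Fixpoint rising (r : R) (k : nat) : R :=
  match k with O => 1 | S k' => rising r k' * (r + INR k') end.

(* NB(r,p) pmf: P(k) = C(k+r-1,k) p^r (1-p)^k  (number of failures before the
   r-th success, success probability p); NB(r,p)*NB(s,p) = NB(r+s,p). *)
Definition negbin_pmf (r p : R) (k : nat) : R :=
  rising r k / INR (Factorial.fact k) * Rpower p r * (1 - p) ^ k.

(* Adding an independent summand can only spread a distribution out: every
   interval [a, a+eps] has Z+X-probability at most sup_x0 P(X in [x0, x0+eps]),
   because that probability is an average over the values j of Z of
   P(X in [a-j, a+eps-j]).  Poisson and negative binomial laws form
   convolution semigroups in their parameter, and so do binomial laws in the
   number of trials, which gives the "if" directions.

   For the converse it suffices to compare at one eps.  For Poisson and
   negative binomial laws take eps = 1/2, where Q is the largest atom: if Z has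
   full support, every atom of Z+Y is strictly smaller than the largest atom of
   Y, and as the atoms of Z+Y tend to 0, so is their supremum.  For the
   binomial take eps = n + 1/2: Bin(n,p) puts all its mass on {0,..,n}, while
   no interval of length n + 1/2 contains both atoms 0 and m of Bin(m,p). *)
From Stdlib Require Import Reals Lra Lia FunctionalExtensionality.
From Coquelicot Require Import Coquelicot.
Open Scope R_scope.

Fixpoint fsum (f : nat -> R) (n : nat) : R :=
  match n with O => 0 | S n' => fsum f n' + f n' end.

Lemma fsum_ext f g n : (forall k, (k < n)%nat -> f k = g k) -> fsum f n = fsum g n.
Proof.
  induction n as [|n IH]; simpl; intros H; [reflexivity|].
  rewrite IH, H; auto; intros; apply H; lia.
Qed.

Lemma fsum_le f g n : (forall k, (k < n)%nat -> f k <= g k) -> fsum f n <= fsum g n.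
Proof.
  induction n as [|n IH]; simpl; intros H; [lra|].
  assert (fsum f n <= fsum g n) by (apply IH; intros; apply H; lia).
  specialize (H n (Nat.lt_succ_diag_r n)); lra.
Qed.

Lemma fsum_ge0 f n : (forall k, 0 <= f k) -> 0 <= fsum f n.
Proof. intros H; induction n; simpl; [lra|]. specialize (H n); lra. Qed.

Lemma fsum_mono_len f n m : (forall k, 0 <= f k) -> (n <= m)%nat -> fsum f n <= fsum f m.
Proof. intros H Hm; induction Hm; [lra|]. simpl. specialize (H m); lra. Qed.

Lemma fsum_eventually_zero f n m :
  (forall k, (n <= k)%nat -> f k = 0) -> (n <= m)%nat -> fsum f m = fsum f n.
Proof. intros H Hm; induction Hm; [reflexivity|]. simpl. rewrite IHHm, H; [lra|lia]. Qed.

Lemma fsum_plus f g n : fsum (fun k => f k + g k) n = fsum f n + fsum g n.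
Proof. induction n; simpl; [lra|]. rewrite IHn; lra. Qed.

Lemma fsum_scal c f n : fsum (fun k => c * f k) n = c * fsum f n.
Proof. induction n; simpl; [lra|]. rewrite IHn; lra. Qed.

Lemma fsum_zero n : fsum (fun _ => 0) n = 0.
Proof. induction n; simpl; [lra|]. rewrite IHn; lra. Qed.

Lemma fsum_first f n : fsum f (S n) = f 0%nat + fsum (fun i => f (S i)) n.
Proof. induction n; simpl in *; [lra|]. rewrite IHn. lra. Qed.

Lemma fsum_swap (h : nat -> nat -> R) N M :
  fsum (fun k => fsum (fun j => h j k) M) N = fsum (fun j => fsum (fun k => h j k) N) M.
Proof.
  induction N as [|N IH]; simpl.
  - rewrite fsum_zero; reflexivity.
  - rewrite IH, <- fsum_plus. reflexivity.
Qed.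

Lemma fsum_shift (g : nat -> R) j N :
  fsum (fun k => if Nat.leb j k then g (k - j)%nat else 0) N = fsum g (N - j).
Proof.
  induction N as [|N IH]; [reflexivity|]. cbn [fsum]. rewrite IH.
  destruct (Nat.leb j N) eqn:E.
  - apply Nat.leb_le in E. replace (S N - j)%nat with (S (N - j)) by lia. reflexivity.
  - apply Nat.leb_gt in E. replace (S N - j)%nat with (N - j)%nat by lia. lra.
Qed.

Lemma fsum_extend_by_zero f k N : (S k <= N)%nat ->
  fsum f (S k) = fsum (fun j => if Nat.leb j k then f j else 0) N.
Proof.
  intros H. rewrite (fsum_eventually_zero _ (S k) N); auto.
  - apply fsum_ext. intros j Hj. replace (Nat.leb j k) with true; auto.
    symmetry; apply Nat.leb_le; lia.
  - intros j Hj. replace (Nat.leb j k) with false; auto. symmetry; apply Nat.leb_gt; lia.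
Qed.

Lemma fsum_vanishing_le f g N j : (j < N)%nat ->
  (forall k, (k < N)%nat -> f k <= g k) -> f j = 0 -> fsum f N + g j <= fsum g N.
Proof.
  induction N as [|N IH]; intros Hj H Hf; [lia|]. simpl.
  destruct (Nat.eq_dec j N) as [->|D].
  - assert (fsum f N <= fsum g N) by (apply fsum_le; intros; apply H; lia). lra.
  - assert (fsum f N + g j <= fsum g N) by (apply IH; [lia|intros; apply H; lia|auto]).
    specialize (H N ltac:(lia)). lra.
Qed.

Lemma fsum_le_single_support f N c : (forall k, 0 <= f k) -> (forall k, f k <= c) ->
  0 <= c -> (forall i j, f i <> 0 -> f j <> 0 -> i = j) -> fsum f N <= c.
Proof.
  intros H0 Hc c0 Hu. induction N as [|N IH]; simpl; [lra|].
  destruct (Req_dec (f N) 0) as [E|E]; [rewrite E; lra|].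
  rewrite (fsum_ext _ (fun _ => 0)), fsum_zero; [specialize (Hc N); lra|].
  intros k Hk. destruct (Req_dec (f k) 0) as [|Ek]; auto. specialize (Hu k N Ek E). lia.
Qed.

Lemma sum_n_fsum u n : sum_n u n = fsum u (S n).
Proof.
  induction n as [|n IH]; [rewrite sum_O; simpl; lra|]. rewrite sum_Sn, IH. reflexivity.
Qed.

Lemma sum_f_R0_fsum f n : sum_f_R0 f n = fsum f (S n).
Proof. induction n; simpl; [lra|]. rewrite IHn. reflexivity. Qed.

Lemma is_series_fsum u n : (forall k, (n <= k)%nat -> u k = 0) -> is_series u (fsum u n).
Proof.
  intros H. enough (L : is_lim_seq (sum_n u) (fsum u n)) by exact L.
  apply is_lim_seq_ext_loc with (u := fun _ => fsum u n); [|apply is_lim_seq_const].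
  exists n. intros k Hk. rewrite sum_n_fsum. symmetry. apply fsum_eventually_zero; auto.
Qed.

Lemma finite_prefix_max_lt (u : nat -> R) M K : 0 < M -> (forall k, u k < M) ->
  exists c, c < M /\ forall k, (k < K)%nat -> u k <= c.
Proof.
  intros HM Hu. induction K as [|K [c [Hc HK]]].
  - exists 0. split; [lra|intros; lia].
  - exists (Rmax c (u K)). split; [apply Rmax_lub_lt; auto|].
    intros k Hk. destruct (Nat.eq_dec k K) as [->|D]; [apply Rmax_r|].
    eapply Rle_trans; [apply HK; lia|apply Rmax_l].
Qed.

Lemma null_seq_sup_lt (u : nat -> R) M : 0 < M -> (forall k, u k < M) ->
  is_lim_seq u 0 -> exists c, c < M /\ forall k, u k <= c.
Proof.
  intros HM Hu Hlim. apply is_lim_seq_spec in Hlim.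
  destruct (Hlim (mkposreal (M / 2) ltac:(lra))) as [K HK]. simpl in HK.
  destruct (finite_prefix_max_lt u M K HM Hu) as [c [Hc HcK]].
  exists (Rmax c (M / 2)). split; [apply Rmax_lub_lt; lra|]. intros k.
  destruct (Nat.lt_ge_cases k K) as [Hk|Hk].
  - eapply Rle_trans; [apply HcK; auto|apply Rmax_l].
  - specialize (HK k Hk). apply Rabs_def2 in HK. eapply Rle_trans; [|apply Rmax_r]. lra.
Qed.

Definition nonneg (p : nat -> R) : Prop := forall k, 0 <= p k.

Definition subprob (p : nat -> R) : Prop := nonneg p /\ forall N, fsum p N <= 1.

Definition pmf_on (p : nat -> R) (a b : R) (k : nat) : R :=
  if Rle_dec a (INR k) then (if Rle_dec (INR k) b then p k else 0) else 0.

Lemma pmf_on_nonneg p a b : nonneg p -> nonneg (pmf_on p a b).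
Proof. intros H k; unfold pmf_on. destruct Rle_dec; [destruct Rle_dec|]; auto; lra. Qed.

Lemma pmf_on_le p a b k : nonneg p -> pmf_on p a b k <= p k.
Proof. intros H; unfold pmf_on. destruct Rle_dec; [destruct Rle_dec|]; auto; try lra; apply H. Qed.

Lemma prob_interval_fsum p a b N : b < INR N -> prob_interval p a b = fsum (pmf_on p a b) N.
Proof.
  intros HN. apply is_series_unique, is_series_fsum. intros k Hk. apply le_INR in Hk.
  unfold pmf_on. destruct (Rle_dec a (INR k)); [|reflexivity].
  destruct (Rle_dec (INR k) b); [lra|reflexivity].
Qed.

Lemma fsum_le_prob_interval p a b n : nonneg p -> fsum (pmf_on p a b) n <= prob_interval p a b.
Proof.
  intros H. destruct (INR_unbounded b) as [N HN].
  rewrite (prob_interval_fsum p a b (max n N)).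
  - apply fsum_mono_len; [apply pmf_on_nonneg; auto|lia].
  - apply Rlt_le_trans with (INR N); [lra|apply le_INR; lia].
Qed.

Lemma prob_interval_ge0 p a b : nonneg p -> 0 <= prob_interval p a b.
Proof. intros H. exact (fsum_le_prob_interval p a b 0 H). Qed.

Lemma prob_interval_le1 p a b : subprob p -> prob_interval p a b <= 1.
Proof.
  intros [H1 H2]. destruct (INR_unbounded b) as [N HN].
  rewrite (prob_interval_fsum p a b N) by lra.
  apply Rle_trans with (fsum p N); auto. apply fsum_le; intros; apply pmf_on_le; auto.
Qed.

Lemma pmf_le_prob_interval p k eps : nonneg p -> 0 <= eps ->
  p k <= prob_interval p (INR k) (INR k + eps).
Proof.
  intros Hp He. eapply Rle_trans; [|apply (fsum_le_prob_interval _ _ _ (S k) Hp)]. simpl.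
  assert (0 <= fsum (pmf_on p (INR k) (INR k + eps)) k) by apply fsum_ge0, pmf_on_nonneg, Hp.
  assert (pmf_on p (INR k) (INR k + eps) k = p k)
    by (unfold pmf_on; destruct Rle_dec; [destruct Rle_dec|]; lra).
  lra.
Qed.

(* An interval of length 1/2 contains at most one integer. *)
Lemma prob_interval_half_le p a c : nonneg p -> (forall k, p k <= c) -> 0 <= c ->
  prob_interval p a (a + / 2) <= c.
Proof.
  intros H0 Hc c0. destruct (INR_unbounded (a + / 2)) as [N HN].
  rewrite (prob_interval_fsum _ _ _ N) by lra.
  apply fsum_le_single_support; auto.
  - apply pmf_on_nonneg; auto.
  - intros k. eapply Rle_trans; [apply pmf_on_le; auto|apply Hc].
  - assert (A : forall i, pmf_on p a (a + / 2) i <> 0 -> a <= INR i <= a + / 2).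
    { intros i. unfold pmf_on. destruct Rle_dec; [destruct Rle_dec|]; intros; try lra; tauto. }
    intros i j Hi Hj. apply A in Hi. apply A in Hj.
    destruct (Nat.lt_total i j) as [L|[L|L]]; auto; apply le_INR in L; rewrite S_INR in L; lra.
Qed.

Definition conv (pZ pX : nat -> R) (k : nat) : R :=
  fsum (fun j => pZ j * pX (k - j)%nat) (S k).

Lemma pmf_on_conv p q a b k :
  pmf_on (conv p q) a b k = fsum (fun j => p j * pmf_on q (a - INR j) (b - INR j) (k - j)) (S k).
Proof.
  assert (shift : forall j, (j <= k)%nat -> pmf_on q (a - INR j) (b - INR j) (k - j) =
    if Rle_dec a (INR k) then (if Rle_dec (INR k) b then q (k - j)%nat else 0) else 0).
  { intros j Hj. unfold pmf_on. rewrite minus_INR by auto.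
    destruct (Rle_dec (a - INR j) (INR k - INR j)); destruct (Rle_dec a (INR k)); try lra;
      destruct (Rle_dec (INR k - INR j) (b - INR j)); destruct (Rle_dec (INR k) b); lra. }
  rewrite (fsum_ext _ (fun j => p j *
    (if Rle_dec a (INR k) then (if Rle_dec (INR k) b then q (k - j)%nat else 0) else 0)))
    by (intros j Hj; rewrite shift by lia; reflexivity).
  unfold pmf_on, conv. destruct (Rle_dec a (INR k)); [destruct (Rle_dec (INR k) b)|];
    [reflexivity| |]; rewrite (fsum_ext _ (fun _ => 0)), fsum_zero; auto; intros; lra.
Qed.

(* Exchanging the two sums exhibits the probability of [a, a+eps] under the
   convolution as a [pZ]-average of probabilities of shifted intervals. *)
Lemma prob_interval_conv_le pZ pX eps M : subprob pZ -> nonneg pX ->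
  (forall x0, prob_interval pX x0 (x0 + eps) <= M) ->
  forall a, prob_interval (conv pZ pX) a (a + eps) <= M.
Proof.
  intros [HZ1 HZ2] HX HM a.
  assert (M0 : 0 <= M) by (eapply Rle_trans; [apply (prob_interval_ge0 pX 0 (0 + eps) HX)|apply HM]).
  destruct (INR_unbounded (a + eps)) as [N HN].
  rewrite (prob_interval_fsum _ _ _ N) by lra.
  set (h := fun j k => if Nat.leb j k
    then pZ j * pmf_on pX (a - INR j) (a + eps - INR j) (k - j) else 0).
  rewrite (fsum_ext _ (fun k => fsum (fun j => h j k) N))
    by (intros k Hk; rewrite pmf_on_conv; apply fsum_extend_by_zero; lia).
  rewrite fsum_swap.
  apply Rle_trans with (fsum (fun j => M * pZ j) N).
  2:{ rewrite fsum_scal. specialize (HZ2 N). apply Rmult_le_compat_l with (r := M) in HZ2; lra. }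
  apply fsum_le. intros j Hj. unfold h.
  rewrite (fsum_ext _ (fun k => pZ j *
    (if Nat.leb j k then pmf_on pX (a - INR j) (a + eps - INR j) (k - j) else 0)))
    by (intros k _; destruct (Nat.leb j k); lra).
  rewrite fsum_scal, Rmult_comm. apply Rmult_le_compat_r; [apply HZ1|].
  rewrite fsum_shift. eapply Rle_trans; [apply fsum_le_prob_interval; auto|].
  replace (a + eps - INR j) with ((a - INR j) + eps) by ring. apply HM.
Qed.

Lemma conv_nonneg p q : nonneg p -> nonneg q -> nonneg (conv p q).
Proof. intros Hp Hq k. apply fsum_ge0. intros j. apply Rmult_le_pos; auto. Qed.

Lemma conv_subprob p q : subprob p -> subprob q -> subprob (conv p q).
Proof.
  intros Hp Hq. assert (Hpq := conv_nonneg p q (proj1 Hp) (proj1 Hq)). split; auto.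
  intros N. eapply Rle_trans;
    [|apply (prob_interval_conv_le p q (INR N + 1) 1 Hp (proj1 Hq)
              (fun x0 => prob_interval_le1 q _ _ Hq) (-1))].
  eapply Rle_trans; [|apply fsum_le_prob_interval, Hpq].
  right. apply fsum_ext. intros k Hk. unfold pmf_on. apply lt_INR in Hk.
  assert (0 <= INR k) by apply pos_INR.
  destruct Rle_dec; [destruct Rle_dec|]; lra.
Qed.

Lemma subprob_lim0 p : subprob p -> is_lim_seq p 0.
Proof.
  intros [H1 H2]. apply ex_series_lim_0.
  destruct (ex_finite_lim_seq_incr (sum_n p) 1) as [l Hl].
  - intros n. rewrite !sum_n_fsum. simpl. specialize (H1 (S n)). lra.
  - intros n. rewrite sum_n_fsum. apply H2.
  - exists l. exact Hl.
Qed.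

Lemma levy_conc_le p eps (M : R) : (forall x0, prob_interval p x0 (x0 + eps) <= M) ->
  Rbar_le (levy_conc p eps) M.
Proof.
  intros H. apply (Lub_Rbar_correct (fun y => exists x0, y = prob_interval p x0 (x0 + eps))).
  intros y [x0 ->]. apply H.
Qed.

Lemma prob_interval_le_levy_conc p eps x0 :
  Rbar_le (prob_interval p x0 (x0 + eps)) (levy_conc p eps).
Proof.
  apply (Lub_Rbar_correct (fun y => exists x0, y = prob_interval p x0 (x0 + eps))).
  exists x0; reflexivity.
Qed.

Lemma levy_conc_finite p eps : subprob p -> exists M : R, levy_conc p eps = Finite M /\
  forall x0, prob_interval p x0 (x0 + eps) <= M.
Proof.
  intros Hs.
  assert (U := levy_conc_le p eps 1 (fun x0 => prob_interval_le1 p _ _ Hs)).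
  assert (L := prob_interval_le_levy_conc p eps 0).
  destruct (levy_conc p eps) as [M| |] eqn:E; simpl in *; try tauto.
  exists M. split; auto. intros x0.
  assert (L' := prob_interval_le_levy_conc p eps x0). rewrite E in L'. exact L'.
Qed.

Lemma wd_le_refl p : wd_le p p.
Proof. intros eps _. apply Rbar_le_refl. Qed.

Lemma wd_le_trans p q r : wd_le p q -> wd_le q r -> wd_le p r.
Proof. intros H1 H2 eps He. eapply Rbar_le_trans; [apply H2|apply H1]; auto. Qed.

Lemma wd_le_conv pZ pX : subprob pZ -> subprob pX -> wd_le pX (conv pZ pX).
Proof.
  intros HZ HX eps _. destruct (levy_conc_finite pX eps HX) as [M [E HM]]. rewrite E.
  apply levy_conc_le, prob_interval_conv_le; auto. apply HX.
Qed.

Lemma conv_not_wd_le pZ pY k0 : subprob pZ -> subprob pY -> (forall k, 0 < pZ k) ->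
  0 < pY k0 -> ~ wd_le (conv pZ pY) pY.
Proof.
  intros HZ HY Zpos Hk0 Hwd.
  destruct (levy_conc_finite pY (/ 2) HY) as [M [EM HM]].
  assert (atom_le : forall k, pY k <= M).
  { intros k. eapply Rle_trans; [apply (pmf_le_prob_interval _ k (/ 2)); [apply HY|lra]|].
    apply HM. }
  assert (Mpos : 0 < M) by (specialize (atom_le k0); lra).
  (* The mass [pZ (S k)] is missing from the weights of the atom [k] of the convolution. *)
  assert (conv_atom_lt : forall k, conv pZ pY k < M).
  { intros k. apply Rle_lt_trans with (fsum (fun j => M * pZ j) (S k)).
    - apply fsum_le. intros j _. rewrite Rmult_comm.
      apply Rmult_le_compat_r; [apply (proj1 HZ)|apply atom_le].
    - rewrite fsum_scal. assert (Hmass := proj2 HZ (S (S k))). simpl in Hmass |- *.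
      specialize (Zpos (S k)).
      assert (M * (fsum pZ k + pZ k) <= M * (1 - pZ (S k))) by (apply Rmult_le_compat_l; lra).
      nra. }
  destruct (null_seq_sup_lt _ M Mpos conv_atom_lt (subprob_lim0 _ (conv_subprob _ _ HZ HY)))
    as [c [cM Hc]].
  assert (c0 : 0 <= c) by (eapply Rle_trans; [apply conv_nonneg; [apply HZ|apply HY]|apply (Hc 0%nat)]).
  assert (U : Rbar_le (levy_conc (conv pZ pY) (/ 2)) c).
  { apply levy_conc_le. intros x0.
    apply prob_interval_half_le; auto. apply conv_nonneg; [apply HZ|apply HY]. }
  specialize (Hwd (/ 2) ltac:(lra)). rewrite EM in Hwd.
  assert (T := Rbar_le_trans _ _ _ Hwd U). simpl in T. lra.
Qed.

Section ConvolutionSemigroup.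

Variable P : R -> nat -> R.
Hypothesis P_subprob : forall a, 0 < a -> subprob (P a).
Hypothesis P_pos : forall a k, 0 < a -> 0 < P a k.
Hypothesis P_conv : forall a b k, 0 < a -> 0 < b -> P (a + b) k = conv (P a) (P b) k.

Lemma conv_semigroup_wd_le_iff a b : 0 < a -> 0 < b -> wd_le (P a) (P b) <-> a <= b.
Proof.
  assert (split_larger : forall a b, 0 < a -> a < b -> P b = conv (P (b - a)) (P a)).
  { intros a' b' Ha' Hab. apply functional_extensionality. intros k.
    rewrite <- P_conv by lra. f_equal; ring. }
  intros Ha Hb. split.
  - intros H. destruct (Rle_or_lt a b) as [|Hlt]; auto. exfalso.
    rewrite (split_larger b a) in H by auto.
    revert H. apply (conv_not_wd_le _ _ 0);
      [apply P_subprob; lra|apply P_subprob; lra|intros; apply P_pos; lra|apply P_pos; lra].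
  - intros [Hlt|<-]; [|apply wd_le_refl].
    rewrite (split_larger a b) by auto. apply wd_le_conv; apply P_subprob; lra.
Qed.

End ConvolutionSemigroup.

(** * Poisson laws *)

Lemma poisson_pos l k : 0 < l -> 0 < poisson_pmf l k.
Proof.
  intros H. unfold poisson_pmf. apply Rdiv_lt_0_compat; [|apply INR_fact_lt_0].
  apply Rmult_lt_0_compat; [apply exp_pos|apply pow_lt; auto].
Qed.

Lemma poisson_subprob l : 0 < l -> subprob (poisson_pmf l).
Proof.
  intros H. split; [intros k; left; apply poisson_pos; auto|].
  intros [|n]; [simpl; lra|].
  assert (E : is_lim_seq (sum_n (fun k => scal (pow_n l k) (/ INR (Factorial.fact k)))) (exp l))
    by exact (is_exp_Reals l).
  assert (Hpartial : sum_n (fun k => scal (pow_n l k) (/ INR (Factorial.fact k))) n <= exp l).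
  { apply (is_lim_seq_incr_compare _ _ E). intros m. rewrite sum_Sn.
    assert (next_ge0 : 0 <= scal (pow_n l (S m)) (/ INR (Factorial.fact (S m)))).
    { rewrite pow_n_pow. apply Rmult_le_pos; [left; apply pow_lt; auto|].
      left; apply Rinv_0_lt_compat, INR_fact_lt_0. }
    change (plus ?a ?b) with (a + b). lra. }
  rewrite sum_n_fsum in Hpartial.
  rewrite (fsum_ext _ (fun k => exp (- l) * scal (pow_n l k) (/ INR (Factorial.fact k)))).
  - rewrite fsum_scal.
    apply Rmult_le_compat_l with (r := exp (- l)) in Hpartial; [|left; apply exp_pos].
    rewrite <- exp_plus in Hpartial. replace (- l + l) with 0 in Hpartial by ring.
    rewrite exp_0 in Hpartial. exact Hpartial.
  - intros k _. unfold poisson_pmf. rewrite <- pow_n_pow. unfold Rdiv. apply Rmult_assoc.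
Qed.

Lemma poisson_conv a b k : poisson_pmf (a + b) k = conv (poisson_pmf a) (poisson_pmf b) k.
Proof.
  unfold conv, poisson_pmf. rewrite binomial, sum_f_R0_fsum.
  unfold Rdiv. rewrite (Rmult_comm _ (/ INR _)), <- Rmult_assoc, <- fsum_scal.
  apply fsum_ext. intros j Hj. unfold Binomial.C.
  replace (- (a + b)) with (- a + - b) by ring. rewrite exp_plus.
  assert (F1 := INR_fact_neq_0 k). assert (F2 := INR_fact_neq_0 j).
  assert (F3 := INR_fact_neq_0 (k - j)).
  field. auto.
Qed.

(** * Binomial laws *)

Lemma binomial_C_n_0 n : Binomial.C n 0 = 1.
Proof.
  unfold Binomial.C. rewrite Nat.sub_0_r. simpl.
  assert (H := INR_fact_neq_0 n). field; auto.
Qed.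

Lemma binomial_C_n_n n : Binomial.C n n = 1.
Proof. rewrite pascal_step1, Nat.sub_diag by lia. apply binomial_C_n_0. Qed.

Lemma binomial_C_pos n k : 0 < Binomial.C n k.
Proof.
  unfold Binomial.C. apply Rdiv_lt_0_compat; [apply INR_fact_lt_0|].
  apply Rmult_lt_0_compat; apply INR_fact_lt_0.
Qed.

Lemma binom_nonneg n p : 0 < p < 1 -> nonneg (binom_pmf n p).
Proof.
  intros Hp k. unfold binom_pmf. destruct (Nat.leb k n); [|lra].
  left. apply Rmult_lt_0_compat; [apply Rmult_lt_0_compat|];
    [apply binomial_C_pos|apply pow_lt; lra|apply pow_lt; lra].
Qed.

Lemma binom_out_of_range n p k : (n < k)%nat -> binom_pmf n p k = 0.
Proof.
  intros H. unfold binom_pmf. replace (Nat.leb k n) with false; [reflexivity|].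
  symmetry; apply Nat.leb_gt; lia.
Qed.

Lemma binom_total n p N : (n < N)%nat -> fsum (binom_pmf n p) N = 1.
Proof.
  intros HN. rewrite (fsum_eventually_zero _ (S n)); [|intros; apply binom_out_of_range; lia|lia].
  rewrite <- sum_f_R0_fsum.
  transitivity ((p + (1 - p)) ^ n); [|replace (p + (1 - p)) with 1 by ring; apply pow1].
  rewrite binomial. apply sum_eq. intros i Hi. unfold binom_pmf.
  replace (Nat.leb i n) with true; [reflexivity|symmetry; apply Nat.leb_le; lia].
Qed.

Lemma binom_subprob n p : 0 < p < 1 -> subprob (binom_pmf n p).
Proof.
  intros Hp. split; [apply binom_nonneg; auto|]. intros N.
  apply Rle_trans with (fsum (binom_pmf n p) (max N (S n))).
  - apply fsum_mono_len; [apply binom_nonneg; auto|lia].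
  - rewrite binom_total by lia. lra.
Qed.

Definition bernoulli_pmf (p : R) (k : nat) : R :=
  match k with O => 1 - p | 1%nat => p | _ => 0 end.

Lemma bernoulli_subprob p : 0 < p < 1 -> subprob (bernoulli_pmf p).
Proof.
  intros Hp. assert (H0 : nonneg (bernoulli_pmf p)) by (intros [|[|k]]; simpl; lra).
  split; auto. intros N.
  apply Rle_trans with (fsum (bernoulli_pmf p) (max N 2)); [apply fsum_mono_len; auto; lia|].
  rewrite (fsum_eventually_zero _ 2); [simpl; lra| |lia].
  intros [|[|k]] Hk; [lia|lia|reflexivity].
Qed.

Lemma binom_succ_conv n p k : binom_pmf (S n) p k = conv (bernoulli_pmf p) (binom_pmf n p) k.
Proof.
  unfold conv. destruct k as [|k].
  - simpl. unfold binom_pmf. simpl. rewrite !binomial_C_n_0, !Nat.sub_0_r. ring.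
  - rewrite (fsum_eventually_zero _ 2); [|intros [|[|j]] Hj; [lia|lia|simpl; ring]|lia].
    cbn [fsum bernoulli_pmf]. rewrite Nat.sub_0_r. replace (S k - 1)%nat with k by lia.
    destruct (Nat.lt_total k n) as [L|[<-|L]].
    + unfold binom_pmf.
      replace (Nat.leb (S k) (S n)) with true by (symmetry; apply Nat.leb_le; lia).
      replace (Nat.leb (S k) n) with true by (symmetry; apply Nat.leb_le; lia).
      replace (Nat.leb k n) with true by (symmetry; apply Nat.leb_le; lia).
      rewrite <- pascal by auto.
      replace (S n - S k)%nat with (S (n - S k)) by lia.
      replace (n - k)%nat with (S (n - S k)) by lia. cbn [pow]. ring.
    + rewrite (binom_out_of_range k p (S k)) by lia. unfold binom_pmf.
      rewrite !Nat.leb_refl, !Nat.sub_diag, !binomial_C_n_n. cbn [pow]. ring.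
    + rewrite !binom_out_of_range by lia. ring.
Qed.

Lemma binom_wd_le_mono m n p : 0 < p < 1 -> (m <= n)%nat ->
  wd_le (binom_pmf m p) (binom_pmf n p).
Proof.
  intros Hp H. induction H as [|n _ IH]; [apply wd_le_refl|].
  eapply wd_le_trans; [apply IH|].
  replace (binom_pmf (S n) p) with (conv (bernoulli_pmf p) (binom_pmf n p))
    by (apply functional_extensionality; intros; symmetry; apply binom_succ_conv).
  apply wd_le_conv; [apply bernoulli_subprob|apply binom_subprob]; auto.
Qed.

Lemma binom_concentrated n p : 0 < p < 1 -> Rbar_le 1 (levy_conc (binom_pmf n p) (INR n + / 2)).
Proof.
  intros Hp. eapply Rbar_le_trans; [|apply (prob_interval_le_levy_conc _ _ 0)]. simpl.
  eapply Rle_trans; [|apply (fsum_le_prob_interval _ _ _ (S n)); apply binom_nonneg; auto].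
  rewrite <- (binom_total n p (S n)) by lia. right. apply fsum_ext. intros k Hk.
  unfold pmf_on. assert (Hk' : (k <= n)%nat) by lia. apply le_INR in Hk'.
  assert (0 <= INR k) by apply pos_INR.
  destruct Rle_dec; [destruct Rle_dec|]; lra.
Qed.

(* An interval [x0, x0 + eps] misses the atom m if x0 <= 0, and the atom 0 otherwise. *)
Lemma binom_spread m p eps : 0 < p < 1 -> eps < INR m ->
  Rbar_le (levy_conc (binom_pmf m p) eps) (1 - Rmin (p ^ m) ((1 - p) ^ m)).
Proof.
  intros Hp Heps. apply levy_conc_le. intros x0.
  destruct (INR_unbounded (x0 + eps)) as [N0 HN0]. set (N := max (S m) N0).
  rewrite (prob_interval_fsum _ _ _ N)
    by (apply Rlt_le_trans with (INR N0); [lra|apply le_INR; lia]).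
  assert (Htotal : fsum (binom_pmf m p) N = 1) by (apply binom_total; lia).
  assert (Hle : forall k, (k < N)%nat -> pmf_on (binom_pmf m p) x0 (x0 + eps) k <= binom_pmf m p k)
    by (intros; apply pmf_on_le, binom_nonneg; auto).
  destruct (Rle_or_lt x0 0) as [Hx|Hx].
  - assert (binom_pmf m p m = p ^ m).
    { unfold binom_pmf. rewrite Nat.leb_refl, binomial_C_n_n, Nat.sub_diag. simpl. ring. }
    assert (Rmin (p ^ m) ((1 - p) ^ m) <= p ^ m) by apply Rmin_l.
    assert (Hout : pmf_on (binom_pmf m p) x0 (x0 + eps) m = 0)
      by (unfold pmf_on; destruct Rle_dec; [destruct Rle_dec|]; auto; lra).
    assert (Hmiss := fsum_vanishing_le _ _ N m ltac:(lia) Hle Hout). lra.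
  - assert (binom_pmf m p 0 = (1 - p) ^ m).
    { unfold binom_pmf. simpl. rewrite binomial_C_n_0, Nat.sub_0_r. ring. }
    assert (Rmin (p ^ m) ((1 - p) ^ m) <= (1 - p) ^ m) by apply Rmin_r.
    assert (Hout : pmf_on (binom_pmf m p) x0 (x0 + eps) 0 = 0)
      by (unfold pmf_on; simpl; destruct Rle_dec; auto; lra).
    assert (Hmiss := fsum_vanishing_le _ _ N 0 ltac:(lia) Hle Hout). lra.
Qed.

Lemma binom_not_wd_le m n p : 0 < p < 1 -> (n < m)%nat -> ~ wd_le (binom_pmf m p) (binom_pmf n p).
Proof.
  intros Hp Hnm Hwd.
  assert (0 <= INR n) by apply pos_INR.
  assert (Hm : INR n + / 2 < INR m)
    by (assert (INR (S n) <= INR m) by (apply le_INR; lia); rewrite S_INR in *; lra).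
  assert (0 < Rmin (p ^ m) ((1 - p) ^ m)) by (apply Rmin_pos; apply pow_lt; lra).
  assert (T := Rbar_le_trans _ _ _ (binom_concentrated n p Hp)
    (Rbar_le_trans _ _ _ (Hwd (INR n + / 2) ltac:(lra)) (binom_spread m p _ Hp Hm))).
  simpl in T. lra.
Qed.

Lemma binom_wd_le_iff m n p : 0 < p < 1 ->
  wd_le (binom_pmf m p) (binom_pmf n p) <-> (m <= n)%nat.
Proof.
  intros Hp. split; [|apply binom_wd_le_mono; auto].
  intros H. destruct (Nat.le_gt_cases m n) as [|Hlt]; auto.
  exfalso. exact (binom_not_wd_le m n p Hp Hlt H).
Qed.

(** * Negative binomial laws *)

Definition nb_coef (r : R) (k : nat) : R := rising r k / INR (Factorial.fact k).

Lemma rising_pos r k : 0 < r -> 0 < rising r k.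
Proof.
  intros H. induction k as [|k IH]; simpl; [lra|].
  assert (0 <= INR k) by apply pos_INR. apply Rmult_lt_0_compat; lra.
Qed.

Lemma nb_coef_pos r k : 0 < r -> 0 < nb_coef r k.
Proof. intros H. apply Rdiv_lt_0_compat; [apply rising_pos; auto|apply INR_fact_lt_0]. Qed.

Lemma nb_coef_0 r : nb_coef r 0 = 1.
Proof. unfold nb_coef. simpl. lra. Qed.

Lemma nb_coef_S r k : nb_coef r (S k) * INR (S k) = nb_coef r k * (r + INR k).
Proof.
  unfold nb_coef. cbn [rising]. rewrite fact_simpl, mult_INR.
  assert (H1 := INR_fact_neq_0 k). assert (H2 : INR (S k) <> 0) by (apply not_0_INR; lia).
  field. auto.
Qed.

(* Both sides satisfy the recursion [nb_coef_S] in [k]: split the factor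
   [t + s + k] into [t + j] and [s + (k - j)] inside the sum. *)
Lemma nb_coef_vandermonde t s k :
  fsum (fun j => nb_coef t j * nb_coef s (k - j)) (S k) = nb_coef (t + s) k.
Proof.
  induction k as [|k IH]; [simpl; rewrite !nb_coef_0; lra|].
  assert (HS : INR (S k) <> 0) by (apply not_0_INR; lia).
  apply Rmult_eq_reg_l with (INR (S k)); auto.
  rewrite (Rmult_comm _ (nb_coef (t + s) (S k))), nb_coef_S, <- IH, <- fsum_scal.
  set (A := fun j => INR j * nb_coef t j * nb_coef s (S k - j)).
  set (B := fun j => INR (S k - j) * nb_coef t j * nb_coef s (S k - j)).
  rewrite (fsum_ext _ (fun j => A j + B j))
    by (intros j Hj; unfold A, B; rewrite minus_INR by lia; ring).
  rewrite fsum_plus, fsum_first.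
  replace (A 0%nat) with 0 by (unfold A; simpl; ring).
  rewrite (fsum_ext (fun i => A (S i)) (fun i => (t + INR i) * (nb_coef t i * nb_coef s (k - i)))).
  2:{ intros i Hi. unfold A. replace (S k - S i)%nat with (k - i)%nat by lia.
      rewrite (Rmult_comm (INR (S i)) (nb_coef t (S i))), nb_coef_S. ring. }
  change (fsum B (S (S k))) with (fsum B (S k) + B (S k)).
  replace (B (S k)) with 0 by (unfold B; rewrite Nat.sub_diag; simpl; ring).
  rewrite (fsum_ext B (fun j => (s + INR k - INR j) * (nb_coef t j * nb_coef s (k - j)))).
  2:{ intros j Hj. unfold B. replace (S k - j)%nat with (S (k - j)) by lia.
      rewrite (Rmult_comm _ (nb_coef t j)), Rmult_assoc, (Rmult_comm (INR _)), nb_coef_S,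
        minus_INR by lia.
      ring. }
  rewrite !Rplus_0_r, Rplus_0_l, <- fsum_plus, Rmult_comm, <- fsum_scal.
  apply fsum_ext. intros j _. ring.
Qed.

Lemma negbin_conv t s p k :
  negbin_pmf (t + s) p k = conv (negbin_pmf t p) (negbin_pmf s p) k.
Proof.
  unfold conv. change (negbin_pmf (t + s) p k) with (nb_coef (t + s) k * Rpower p (t + s) * (1 - p) ^ k).
  rewrite <- nb_coef_vandermonde, Rpower_plus, Rmult_assoc, Rmult_comm, <- fsum_scal.
  apply fsum_ext. intros j Hj. unfold negbin_pmf.
  replace k with (j + (k - j))%nat at 1 by lia. rewrite pow_add. unfold nb_coef. ring.
Qed.

Lemma negbin_pos r p k : 0 < r -> 0 < p < 1 -> 0 < negbin_pmf r p k.
Proof.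
  intros Hr Hp. apply Rmult_lt_0_compat; [apply Rmult_lt_0_compat|].
  - apply nb_coef_pos; auto.
  - apply exp_pos.
  - apply pow_lt; lra.
Qed.

(* The partial sums of the series (1 - x)^(-r) = sum_k nb_coef r k x^k, scaled by (1 - x)^r. *)
Definition nb_partial_mass (r : R) (N : nat) (x : R) : R :=
  Rpower (1 - x) r * fsum (fun k => nb_coef r k * x ^ k) N.

(* The derivative telescopes to its last term, which is nonpositive on [0, 1). *)
Lemma nb_partial_mass_derive r N x : x < 1 -> is_derive (nb_partial_mass r (S N)) x
  (- (Rpower (1 - x) r / (1 - x)) * ((r + INR N) * nb_coef r N * x ^ N)).
Proof.
  intros Hx. unfold nb_partial_mass, Rpower. induction N as [|N IH].
  - apply is_derive_ext with (fun y => exp (r * ln (1 - y))).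
    + intros y. simpl. rewrite nb_coef_0. ring.
    + rewrite nb_coef_0. auto_derive; [lra|].
      replace (1 + - x) with (1 - x) by ring. simpl. field. lra.
  - apply (is_derive_ext (K := R_AbsRing) (V := R_NormedModule)) with
      (fun y => exp (r * ln (1 - y)) * fsum (fun k => nb_coef r k * y ^ k) (S N)
                + exp (r * ln (1 - y)) * (nb_coef r (S N) * y ^ S N)).
    + intros y. symmetry. apply Rmult_plus_distr_l.
    + assert (Hlast : is_derive (fun y => exp (r * ln (1 - y)) * (nb_coef r (S N) * y ^ S N)) x
        (exp (r * ln (1 - x)) * nb_coef r (S N) *
           (INR (S N) * x ^ N - r / (1 - x) * x ^ S N))).
      { auto_derive; [lra|]. replace (1 + - x) with (1 - x) by ring.
        change (match N with 0%nat => 1 | S _ => INR N + 1 end) with (INR (S N)).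
        cbn [pow]. field. lra. }
      assert (E := nb_coef_S r N).
      replace (- (exp (r * ln (1 - x)) / (1 - x)) * ((r + INR (S N)) * nb_coef r (S N) * x ^ S N))
        with (plus (- (exp (r * ln (1 - x)) / (1 - x)) * ((r + INR N) * nb_coef r N * x ^ N))
                   (exp (r * ln (1 - x)) * nb_coef r (S N) *
                      (INR (S N) * x ^ N - r / (1 - x) * x ^ S N))).
      * exact (is_derive_plus _ _ _ _ _ IH Hlast).
      * change (plus ?a ?b) with (a + b).
        match goal with |- ?a = ?b => change (@eq R a b) end.
        replace ((r + INR N) * nb_coef r N) with (nb_coef r (S N) * INR (S N))
          by (rewrite E; ring).
        rewrite !S_INR. cbn [pow]. field. lra.
Qed.

Lemma nb_partial_mass_le1 r N q : 0 < r -> 0 <= q < 1 -> nb_partial_mass r N q <= 1.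
Proof.
  intros Hr Hq. destruct N as [|N]; [unfold nb_partial_mass; simpl; lra|].
  assert (at0 : nb_partial_mass r (S N) 0 = 1).
  { unfold nb_partial_mass, Rpower. rewrite fsum_first, Rminus_0_r, ln_1, Rmult_0_r, exp_0, nb_coef_0.
    rewrite (fsum_ext _ (fun _ => 0)), fsum_zero by (intros; simpl; ring). simpl; ring. }
  destruct (MVT_gen (nb_partial_mass r (S N)) 0 q
    (fun x => - (Rpower (1 - x) r / (1 - x)) * ((r + INR N) * nb_coef r N * x ^ N)))
    as [c [Hc E]].
  - intros x Hx. rewrite Rmin_left, Rmax_right in Hx by lra. apply nb_partial_mass_derive. lra.
  - intros x Hx. rewrite Rmin_left, Rmax_right in Hx by lra.
    apply continuity_pt_filterlim, (ex_derive_continuous (K := R_AbsRing) (V := R_NormedModule)).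
    eexists. apply nb_partial_mass_derive. lra.
  - rewrite Rmin_left, Rmax_right in Hc by lra. rewrite at0 in E.
    assert (slope_le0 : - (Rpower (1 - c) r / (1 - c)) * ((r + INR N) * nb_coef r N * c ^ N) <= 0).
    { assert (0 < Rpower (1 - c) r / (1 - c)) by (apply Rdiv_lt_0_compat; [apply exp_pos|lra]).
      assert (0 <= INR N) by apply pos_INR. assert (0 < nb_coef r N) by (apply nb_coef_pos; auto).
      assert (0 <= (r + INR N) * nb_coef r N * c ^ N)
        by (apply Rmult_le_pos; [apply Rmult_le_pos; lra|apply pow_le; lra]).
      nra. }
    assert (0 <= q) by lra. nra.
Qed.

Lemma negbin_subprob r p : 0 < r -> 0 < p < 1 -> subprob (negbin_pmf r p).
Proof.
  intros Hr Hp. split; [intros k; left; apply negbin_pos; auto|].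
  intros N. eapply Rle_trans; [|apply (nb_partial_mass_le1 r N (1 - p)); auto; lra].
  right. unfold nb_partial_mass. rewrite <- fsum_scal. apply fsum_ext. intros k _.
  replace (1 - (1 - p)) with p by ring. unfold negbin_pmf, nb_coef. ring.
Qed.

Theorem mainTheorem10 :
  (forall lam mu : R, 0 < lam -> 0 < mu ->
     (wd_le (poisson_pmf lam) (poisson_pmf mu) <-> lam <= mu)) /\
  (forall (m n : nat) (p : R), 0 < p < 1 ->
     (wd_le (binom_pmf m p) (binom_pmf n p) <-> (m <= n)%nat)) /\
  (forall r s p : R, 0 < r -> 0 < s -> 0 < p < 1 ->
     (wd_le (negbin_pmf r p) (negbin_pmf s p) <-> r <= s)).
Proof.
  split; [|split].
  - apply conv_semigroup_wd_le_iff.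
    + apply poisson_subprob.
    + intros; apply poisson_pos; auto.
    + intros; apply poisson_conv.
  - intros; apply binom_wd_le_iff; auto.
  - intros r s p Hr Hs Hp. apply (conv_semigroup_wd_le_iff (fun a => negbin_pmf a p)); auto.
    + intros; apply negbin_subprob; auto.
    + intros; apply negbin_pos; auto.
    + intros; apply negbin_conv.
Qed.
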